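(* Let $R\subseteq\{e,c,w\}$. $\mathbf{NACCLL}^-_R$ is strongly conservative over $\mathbf{InFNL}_R$, and $\mathbf{NACCLL}_R$ is strongly conservative over $\mathbf{CyInFNL}_R$: for every set $\mathcal S\cup\{s\}$ of $\mathcal L^0$-sequents (sequents not containing $!$), $\mathcal S\vdash_{\mathbf{NACCLL}^-_R}s\iff\mathcal S\vdash_{\mathbf{InFNL}_R}s$, and $\mathcal S\vdash_{\mathbf{NACCLL}_R}s\iff\mathcal S\vdash_{\mathbf{CyInFNL}_R}s$.
   Context: Formulas: terms over a countably infinite set of variables in $\{\wedge,\vee,\cdot,\backslash,/,!,1,0\}$; $\mathcal L^0$-formulas are those without $!$. Structures: elements of the free unital groupoid $(Fm^\circ,\circ,\varepsilon)$ generated by formulas ($\circ$ non-associative, $\varepsilon$ empty structure and unit). $k$ ranges over structures in the free unital groupoid generated by formulas $!a$ (including $\varepsilon$). A context $u$ is a structure with exactly one hole; $u(x)$ fills it. A sequent is $x\Rightarrow\delta$, $\delta$ a formula or the empty stoup $\epsilon$. $\mathbf{NACILL}^0$: initial sequents $a\Rightarrow a$, $\varepsilon\Rightarrow 1$, $0\Rightarrow\epsilon$; rules (premises / conclusion): (cut) $x\Rightarrow a$, $u(a)\Rightarrow\delta$ / $u(x)\Rightarrow\delta$; $(1\Rightarrow)$ $u(\varepsilon)\Rightarrow\delta$ / $u(1)\Rightarrow\delta$; $(\Rightarrow 0)$ $x\Rightarrow\epsilon$ / $x\Rightarrow 0$; $(\backslash\Rightarrow)$ $x\Rightarrow a$,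 $u(b)\Rightarrow\delta$ / $u(x\circ(a\backslash b))\Rightarrow\delta$; $(\Rightarrow\backslash)$ $a\circ x\Rightarrow b$ / $x\Rightarrow a\backslash b$; $(/\Rightarrow)$ $x\Rightarrow a$, $u(b)\Rightarrow\delta$ / $u((b/a)\circ x)\Rightarrow\delta$; $(\Rightarrow/)$ $x\circ a\Rightarrow b$ / $x\Rightarrow b/a$; $(\cdot\Rightarrow)$ $u(a\circ b)\Rightarrow\delta$ / $u(a\cdot b)\Rightarrow\delta$; $(\Rightarrow\cdot)$ $x\Rightarrow a$, $y\Rightarrow b$ / $x\circ y\Rightarrow a\cdot b$; $(\wedge\Rightarrow)$ $u(a_i)\Rightarrow\delta$ / $u(a_1\wedge a_2)\Rightarrow\delta$; $(\Rightarrow\wedge)$ $x\Rightarrow a$, $x\Rightarrow b$ / $x\Rightarrow a\wedge b$; $(\vee\Rightarrow)$ $u(a)\Rightarrow\delta$, $u(b)\Rightarrow\delta$ / $u(a\vee b)\Rightarrow\delta$; $(\Rightarrow\vee)$ $x\Rightarrow a_i$ / $x\Rightarrow a_1\vee a_2$; $(!\Rightarrow)$ $u(a)\Rightarrow\delta$ / $u(!a)\Rightarrow\delta$; $(\Rightarrow!)$ $k\Rightarrow a$ / $k\Rightarrow !a$; $(kw)$ $u(\varepsilon)\Rightarrow\delta$ / $u(k)\Rightarrow\delta$; $(kc)$ $u(k\circ k)\Rightarrow\delta$ / $u(k)\Rightarrow\delta$; two-directional: $(ke)$ $u(k\circ y)\Rightarrow\delta\leftrightarrow u(y\circ k)\Rightarrow\delta$;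 $(ka1)$ $u((k\circ y)\circ z)\Rightarrow\delta\leftrightarrow u(k\circ(y\circ z))\Rightarrow\delta$; $(ka2)$ $u((x\circ y)\circ k)\Rightarrow\delta\leftrightarrow u(x\circ(y\circ k))\Rightarrow\delta$. $\mathbf{NACCLL}^-$: $\mathbf{NACILL}^0$ plus initial sequents ${\sim}(-a)\Rightarrow a$, $-({\sim}a)\Rightarrow a$, $({\sim}a)/b\Rightarrow a\backslash(-b)$, $a\backslash(-b)\Rightarrow({\sim}a)/b$, where ${\sim}a:=a\backslash 0$, $-a:=0/a$. $\mathbf{NACCLL}$: additionally ${\sim}a\Rightarrow -a$ and $-a\Rightarrow{\sim}a$. $\mathbf{InFNL}$ ($\mathbf{CyInFNL}$): the $!$-free fragment of $\mathbf{NACCLL}^-$ ($\mathbf{NACCLL}$), i.e. only $!$-free formulas and without the rules $(!\Rightarrow),(\Rightarrow!),(kw),(kc),(ke),(ka1),(ka2)$. Structural rules: $(e)$ $u(x\circ y)\Rightarrow\delta$ / $u(y\circ x)\Rightarrow\delta$; $(c)$ $u(x\circ x)\Rightarrow\delta$ / $u(x)\Rightarrow\delta$; $(i)$ $u(\varepsilon)\Rightarrow\delta$ / $u(x)\Rightarrow\delta$; $(o)$ $x\Rightarrow\epsilon$ / $x\Rightarrow a$; $(w)$ means both $(i)$ and $(o)$. Subscript $R$ adds the rules in $R$. $\mathcal S\vdash s$: there is a derivation of $s$ whose leaves are initial sequents or members of $\mathcal S$. *)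

From Stdlib Require Import List Bool.
Import ListNotations.

Inductive fm : Type :=
| Var  : nat -> fm
| Meet : fm -> fm -> fm
| Join : fm -> fm -> fm
| Prod : fm -> fm -> fm
| Ldiv : fm -> fm -> fm        (* Ldiv a b = a \ b *)
| Rdiv : fm -> fm -> fm        (* Rdiv b a = b / a *)
| Bang : fm -> fm
| One  : fm
| Zero : fm.

Definition tilde (a : fm) : fm := Ldiv a Zero.
Definition minus (a : fm) : fm := Rdiv Zero a.

(* Free unital groupoid over formulas: a structure is either the unit
   (None = epsilon) or a nonempty binary tree (no epsilon inside), so that
   epsilon o x = x = x o epsilon holds literally. *)
Inductive nst : Type :=
| NF : fm -> nst
| NC : nst -> nst -> nst.

Definition st : Type := option nst.

Definition SEmp : st := None.
Definition SF (a : fm) : st := Some (NF a).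
Definition comp (x y : st) : st :=
  match x, y with
  | None, _ => y
  | _, None => x
  | Some x', Some y' => Some (NC x' y')
  end.

Inductive ctx : Type :=
| Hole : ctx
| CL : ctx -> st -> ctx
| CR : st -> ctx -> ctx.

Fixpoint fill (u : ctx) (z : st) : st :=
  match u with
  | Hole => z
  | CL u' y => comp (fill u' z) y
  | CR x u' => comp x (fill u' z)
  end.

Fixpoint isKn (x : nst) : Prop :=
  match x with
  | NF (Bang _) => True
  | NF _ => False
  | NC x y => isKn x /\ isKn y
  end.

Definition isK (x : st) : Prop :=
  match x with None => True | Some x' => isKn x' end.

(* Sequents x => delta, delta a formula or the empty stoup (None). *)
Definition seqnt : Type := (st * option fm)%type.

Fixpoint fm_L0 (a : fm) : bool :=
  match a with
  | Var _ | One | Zero => true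
  | Meet a b | Join a b | Prod a b | Ldiv a b | Rdiv a b => fm_L0 a && fm_L0 b
  | Bang _ => false
  end.

Fixpoint nst_L0 (x : nst) : bool :=
  match x with
  | NF a => fm_L0 a
  | NC x y => nst_L0 x && nst_L0 y
  end.

Definition st_L0 (x : st) : bool :=
  match x with None => true | Some x' => nst_L0 x' end.

Definition seq_L0 (s : seqnt) : bool :=
  st_L0 (fst s) && match snd s with None => true | Some a => fm_L0 a end.

Record rset : Type := { r_e : bool; r_c : bool; r_w : bool }.

(* A system: cyc = add ~a=>-a and -a=>~a;  bang = include the exponential
   rules (!=>),(=>!),(kw),(kc),(ke),(ka1),(ka2) and allow !-formulas. *)
Record sys : Type := { s_cyc : bool; s_bang : bool; s_R : rset }.

Inductive rule (T : sys) : list seqnt -> seqnt -> Prop :=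
| r_id a : rule T [] (SF a, Some a)
| r_one : rule T [] (SEmp, Some One)
| r_zero : rule T [] (SF Zero, None)
| r_in1 a : rule T [] (SF (tilde (minus a)), Some a)
| r_in2 a : rule T [] (SF (minus (tilde a)), Some a)
| r_in3 a b : rule T [] (SF (Rdiv (tilde a) b), Some (Ldiv a (minus b)))
| r_in4 a b : rule T [] (SF (Ldiv a (minus b)), Some (Rdiv (tilde a) b))
| r_cy1 a : s_cyc T = true -> rule T [] (SF (tilde a), Some (minus a))
| r_cy2 a : s_cyc T = true -> rule T [] (SF (minus a), Some (tilde a))
| r_cut x a u d : rule T [(x, Some a); (fill u (SF a), d)] (fill u x, d)
| r_oneL u d : rule T [(fill u SEmp, d)] (fill u (SF One), d)
| r_zeroR x : rule T [(x, None)] (x, Some Zero)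
| r_ldivL x a b u d :
    rule T [(x, Some a); (fill u (SF b), d)] (fill u (comp x (SF (Ldiv a b))), d)
| r_ldivR x a b : rule T [(comp (SF a) x, Some b)] (x, Some (Ldiv a b))
| r_rdivL x a b u d :
    rule T [(x, Some a); (fill u (SF b), d)] (fill u (comp (SF (Rdiv b a)) x), d)
| r_rdivR x a b : rule T [(comp x (SF a), Some b)] (x, Some (Rdiv b a))
| r_prodL u a b d : rule T [(fill u (comp (SF a) (SF b)), d)] (fill u (SF (Prod a b)), d)
| r_prodR x y a b : rule T [(x, Some a); (y, Some b)] (comp x y, Some (Prod a b))
| r_meetL1 u a b d : rule T [(fill u (SF a), d)] (fill u (SF (Meet a b)), d)
| r_meetL2 u a b d : rule T [(fill u (SF b), d)] (fill u (SF (Meet a b)), d)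
| r_meetR x a b : rule T [(x, Some a); (x, Some b)] (x, Some (Meet a b))
| r_joinL u a b d :
    rule T [(fill u (SF a), d); (fill u (SF b), d)] (fill u (SF (Join a b)), d)
| r_joinR1 x a b : rule T [(x, Some a)] (x, Some (Join a b))
| r_joinR2 x a b : rule T [(x, Some b)] (x, Some (Join a b))
| r_bangL u a d : s_bang T = true -> rule T [(fill u (SF a), d)] (fill u (SF (Bang a)), d)
| r_bangR k a : s_bang T = true -> isK k -> rule T [(k, Some a)] (k, Some (Bang a))
| r_kw u k d : s_bang T = true -> isK k -> rule T [(fill u SEmp, d)] (fill u k, d)
| r_kc u k d : s_bang T = true -> isK k -> rule T [(fill u (comp k k), d)] (fill u k, d)
| r_ke1 u k y d : s_bang T = true -> isK k ->
    rule T [(fill u (comp k y), d)] (fill u (comp y k), d)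
| r_ke2 u k y d : s_bang T = true -> isK k ->
    rule T [(fill u (comp y k), d)] (fill u (comp k y), d)
| r_ka11 u k y z d : s_bang T = true -> isK k ->
    rule T [(fill u (comp (comp k y) z), d)] (fill u (comp k (comp y z)), d)
| r_ka12 u k y z d : s_bang T = true -> isK k ->
    rule T [(fill u (comp k (comp y z)), d)] (fill u (comp (comp k y) z), d)
| r_ka21 u k x y d : s_bang T = true -> isK k ->
    rule T [(fill u (comp (comp x y) k), d)] (fill u (comp x (comp y k)), d)
| r_ka22 u k x y d : s_bang T = true -> isK k ->
    rule T [(fill u (comp x (comp y k)), d)] (fill u (comp (comp x y) k), d)
| r_ex u x y d : r_e (s_R T) = true ->
    rule T [(fill u (comp x y), d)] (fill u (comp y x), d)
| r_con u x d : r_c (s_R T) = true ->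
    rule T [(fill u (comp x x), d)] (fill u x, d)
| r_wi u x d : r_w (s_R T) = true ->
    rule T [(fill u SEmp, d)] (fill u x, d)
| r_wo x a : r_w (s_R T) = true ->
    rule T [(x, None)] (x, Some a).

(* Derivability from hypotheses S.  In a !-free system (bang = false) every
   sequent occurring in the derivation must be !-free. *)
Inductive derivable (T : sys) (S : seqnt -> Prop) : seqnt -> Prop :=
| d_hyp s : S s -> derivable T S s
| d_rule prems c :
    rule T prems c ->
    (s_bang T = true \/ seq_L0 c = true) ->
    (forall p, In p prems -> derivable T S p) ->
    derivable T S c.

Definition NACCLLm (R : rset) : sys := {| s_cyc := false; s_bang := true;  s_R := R |}.
Definition NACCLL  (R : rset) : sys := {| s_cyc := true;  s_bang := true;  s_R := R |}.
Definition InFNL   (R : rset) : sys := {| s_cyc := false; s_bang := false; s_R := R |}.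
Definition CyInFNL (R : rset) : sys := {| s_cyc := true;  s_bang := false; s_R := R |}.

(* Interpret the exponential system in the !-free one.  A !-free formula denotes itself; [!a]
   denotes [1] if [eps => a] is valid, and otherwise a least element: [0] if weakening is
   available, else a formal bottom (and then a formal top is needed as the value of
   bottom\b).  A structure of !-formulas thus denotes bottom, a structure of 1s (equivalent
   to [eps] by (1=>) and cut), or, under weakening, a structure containing [0] (which makes
   every sequent derivable); so the k-rules and (=>!) are sound, and every rule of the
   exponential system preserves validity, i.e. derivability of the interpreted sequent in
   the !-free system.  On !-free sequents the interpretation is the identity. *)
From Stdlib Require Import List Bool ClassicalEpsilon.
Import ListNotations.

Lemma comp_None_r (x : st) : comp x None = x.
Proof. destruct x; reflexivity. Qed.

Arguments comp : simpl never.

Fixpoint ctx_L0 (u : ctx) : bool :=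
  match u with
  | Hole => true
  | CL u y => ctx_L0 u && st_L0 y
  | CR x u => st_L0 x && ctx_L0 u
  end.

Definition stoup_L0 (d : option fm) : bool :=
  match d with None => true | Some a => fm_L0 a end.

Lemma st_L0_comp x y : st_L0 (comp x y) = st_L0 x && st_L0 y.
Proof. destruct x, y; simpl; rewrite ?andb_true_r; reflexivity. Qed.

Lemma st_L0_fill u z : st_L0 (fill u z) = ctx_L0 u && st_L0 z.
Proof.
  induction u as [|u IH y|x u IH]; simpl; rewrite ?st_L0_comp, ?IH; auto.
  - now rewrite <- !andb_assoc, (andb_comm (st_L0 z)).
  - now rewrite andb_assoc.
Qed.

Fixpoint ctx_comp (u v : ctx) : ctx :=
  match u with
  | Hole => v
  | CL u y => CL (ctx_comp u v) y
  | CR x u => CR x (ctx_comp u v)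
  end.

Lemma fill_ctx_comp u v z : fill (ctx_comp u v) z = fill u (fill v z).
Proof. induction u; simpl; congruence. Qed.

Lemma ctx_L0_comp u v : ctx_L0 (ctx_comp u v) = ctx_L0 u && ctx_L0 v.
Proof.
  induction u as [|u IH y|x u IH]; simpl; rewrite ?IH; auto.
  - now rewrite <- !andb_assoc, (andb_comm (st_L0 y)).
  - now rewrite andb_assoc.
Qed.

Ltac split_andb :=
  repeat match goal with H : _ && _ = true |- _ => apply andb_prop in H as [? ?] end.

Ltac solve_L0 :=
  unfold seq_L0, stoup_L0 in *; cbn [fst snd] in *;
  rewrite ?st_L0_fill, ?st_L0_comp, ?ctx_L0_comp in *; simpl in *;
  split_andb; repeat (apply andb_true_intro; split); auto.

Definition free_sys (cyc : bool) (R : rset) : sys := {| s_cyc := cyc; s_bang := false; s_R := R |}.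
Definition exp_sys (cyc : bool) (R : rset) : sys := {| s_cyc := cyc; s_bang := true; s_R := R |}.

Inductive ext (A : Type) : Type := Bot | Top | Val (a : A).
Arguments Bot {A}.
Arguments Top {A}.
Arguments Val {A} a.

Definition emap {A B : Type} (f : A -> B) (x : ext A) : ext B :=
  match x with Bot => Bot | Top => Top | Val a => Val (f a) end.

Definition eprod {A B C : Type} (f : A -> B -> C) (x : ext A) (y : ext B) : ext C :=
  match x, y with
  | Bot, _ | _, Bot => Bot
  | Top, _ | _, Top => Top
  | Val a, Val b => Val (f a b)
  end.

Definition ediv {A B C : Type} (f : A -> B -> C) (x : ext A) (y : ext B) : ext C :=
  match x, y with
  | Bot, _ | _, Top => Top
  | Top, _ | _, Bot => Bot
  | Val a, Val b => Val (f a b)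
  end.

Definition emeet {A : Type} (f : A -> A -> A) (x y : ext A) : ext A :=
  match x, y with
  | Bot, _ | _, Bot => Bot
  | Top, z | z, Top => z
  | Val a, Val b => Val (f a b)
  end.

Definition ejoin {A : Type} (f : A -> A -> A) (x y : ext A) : ext A :=
  match x, y with
  | Top, _ | _, Top => Top
  | Bot, z | z, Bot => z
  | Val a, Val b => Val (f a b)
  end.

Section Interpretation.

Variable cyc : bool.
Variable R : rset.
Variable S : seqnt -> Prop.
Hypothesis S_L0 : forall t, S t -> seq_L0 t = true.

Notation Dv := (derivable (free_sys cyc R) S).

Lemma Dv_L0 s : Dv s -> seq_L0 s = true.
Proof.
  induction 1 as [s Hs|prems c _ [Hc|Hc] _ _]; auto; discriminate.
Qed.

Lemma Dv_fill_L0 u z d : Dv (fill u z, d) -> ctx_L0 u = true /\ stoup_L0 d = true.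
Proof. intros H; apply Dv_L0 in H; solve_L0. Qed.

Definition valid (x : ext st) (d : ext (option fm)) : Prop :=
  match x, d with
  | Bot, _ | Top, Top | Val _, Top => True
  | Top, _ | Val _, Bot => False
  | Val x, Val d => Dv (x, d)
  end.

Fixpoint val (a : fm) : ext fm :=
  match a with
  | Var n => Val (Var n)
  | Meet a b => emeet Meet (val a) (val b)
  | Join a b => ejoin Join (val a) (val b)
  | Prod a b => eprod Prod (val a) (val b)
  | Ldiv a b => ediv Ldiv (val a) (val b)
  | Rdiv b a => ediv (fun a b => Rdiv b a) (val a) (val b)
  | Bang a =>
      if excluded_middle_informative (valid (Val None) (emap Some (val a))) then Val One
      else if r_w R then Val Zero else Bot
  | One => Val One
  | Zero => Val Zero
  end.

Fixpoint tr_nst (n : nst) : ext st :=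
  match n with
  | NF a => emap SF (val a)
  | NC x y => eprod comp (tr_nst x) (tr_nst y)
  end.

Definition tr (x : st) : ext st := match x with None => Val None | Some n => tr_nst n end.

Definition tr_stoup (d : option fm) : ext (option fm) :=
  match d with None => Val None | Some a => emap Some (val a) end.

Fixpoint tr_ctx (u : ctx) : ext ctx :=
  match u with
  | Hole => Val Hole
  | CL u y => eprod CL (tr_ctx u) (tr y)
  | CR x u => eprod CR (tr x) (tr_ctx u)
  end.

Lemma tr_comp x y : tr (comp x y) = eprod comp (tr x) (tr y).
Proof.
  destruct x as [n|], y as [m|]; simpl; auto;
    repeat match goal with |- context [tr_nst ?n] => destruct (tr_nst n) end;
    simpl; rewrite ?comp_None_r; reflexivity.
Qed.

Lemma tr_fill u z : tr (fill u z) = eprod fill (tr_ctx u) (tr z).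
Proof.
  induction u as [|u IH y|x u IH]; simpl; rewrite ?tr_comp, ?IH.
  - destruct (tr z); reflexivity.
  - destruct (tr_ctx u), (tr z), (tr y); reflexivity.
  - destruct (tr_ctx u), (tr z), (tr x); reflexivity.
Qed.

Lemma val_L0 a a' : val a = Val a' -> fm_L0 a' = true.
Proof.
  enough (H : match val a with Val a' => fm_L0 a' = true | _ => True end)
    by (intros E; now rewrite E in H).
  induction a; simpl; auto.
  all: try (destruct (val a1), (val a2); simpl in *; auto; now rewrite IHa1, IHa2).
  destruct (excluded_middle_informative _); [|destruct (r_w R)]; auto.
Qed.

Lemma tr_L0 x x' : tr x = Val x' -> st_L0 x' = true.
Proof.
  destruct x as [n|]; simpl; [|now intros [= <-]].
  revert x'; induction n as [a|n1 IH1 n2 IH2]; intros x' H; simpl in H.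
  - destruct (val a) eqn:E; try discriminate; injection H as <-; exact (val_L0 _ _ E).
  - destruct (tr_nst n1), (tr_nst n2); try discriminate; injection H as <-.
    rewrite st_L0_comp, (IH1 _ eq_refl), (IH2 _ eq_refl); reflexivity.
Qed.

Lemma val_id a : fm_L0 a = true -> val a = Val a.
Proof.
  induction a; simpl; intros H; split_andb; try discriminate;
    rewrite ?IHa1, ?IHa2 by assumption; reflexivity.
Qed.

Lemma tr_id x : st_L0 x = true -> tr x = Val x.
Proof.
  destruct x as [n|]; simpl; auto.
  induction n as [a|n1 IH1 n2 IH2]; simpl; intros H.
  - now rewrite val_id.
  - split_andb; now rewrite IH1, IH2.
Qed.

Lemma tr_stoup_id d : stoup_L0 d = true -> tr_stoup d = Val d.
Proof. destruct d; simpl; intros; [now rewrite val_id|reflexivity]. Qed.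

Lemma val_weak a : r_w R = true -> exists a', val a = Val a'.
Proof.
  intros Hw; induction a; simpl; eauto.
  all: try (destruct IHa1 as [b1 ->], IHa2 as [b2 ->]; simpl; eauto).
  destruct (excluded_middle_informative _); [|rewrite Hw]; eauto.
Qed.

Lemma tr_weak x : r_w R = true -> exists x', tr x = Val x'.
Proof.
  intros Hw; destruct x as [n|]; simpl; eauto.
  induction n as [a|n1 [y1 IH1] n2 [y2 IH2]]; simpl.
  - destruct (val_weak a Hw) as [b ->]; simpl; eauto.
  - rewrite IH1, IH2; simpl; eauto.
Qed.

Lemma Dv_rule prems c :
  rule (free_sys cyc R) prems c -> seq_L0 c = true -> (forall p, In p prems -> Dv p) -> Dv c.
Proof. intros Hr Hc; apply (d_rule _ _ prems c Hr); auto. Qed.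

Ltac infer r :=
  apply (Dv_rule _ _ r);
  [ repeat match goal with
           | H : Dv _ |- _ => apply Dv_L0 in H
           | E : val _ = Val _ |- _ => apply val_L0 in E
           | E : tr _ = Val _ |- _ => apply tr_L0 in E
           end;
    solve_L0
  | intros ? Hp; repeat destruct Hp as [<- | Hp]; try assumption; contradiction ].

Definition st_below (x y : st) : Prop := forall u d, Dv (fill u y, d) -> Dv (fill u x, d).

Lemma st_below_refl x : st_below x x.
Proof. intros u d H; exact H. Qed.

Fixpoint ones_nst (n : nst) : Prop :=
  match n with
  | NF One => True
  | NF _ => False
  | NC x y => ones_nst x /\ ones_nst y
  end.

Definition ones (x : st) : Prop := match x with None => True | Some n => ones_nst n end.

Lemma ones_comp x y : ones x -> ones y -> ones (comp x y).
Proof. destruct x, y; simpl; auto. Qed.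

Lemma ones_L0 x : ones x -> st_L0 x = true.
Proof.
  destruct x as [n|]; simpl; auto.
  induction n as [[]|n1 IH1 n2 IH2]; simpl; try tauto.
  intros [H1 H2]; rewrite IH1, IH2; auto.
Qed.

Lemma ones_erase x u d : ones x -> (Dv (fill u x, d) <-> Dv (fill u None, d)).
Proof.
  destruct x as [n|]; simpl; [|tauto].
  revert u; induction n as [[]|n1 IH1 n2 IH2]; intros u Hn; simpl in Hn; try contradiction.
  - assert (Dv (SEmp, Some One)) by infer (r_one (free_sys cyc R)).
    split; intros Hfill.
    + infer (r_cut (free_sys cyc R) SEmp One u d).
    + infer (r_oneL (free_sys cyc R) u d).
  - destruct Hn as [Hn1 Hn2].
    change (Some (NC n1 n2)) with (fill (CL Hole (Some n2)) (Some n1)).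
    rewrite <- fill_ctx_comp, IH1, fill_ctx_comp by exact Hn1.
    exact (IH2 u Hn2).
Qed.

Definition has_zero (x : st) : Prop := exists v, ctx_L0 v = true /\ x = fill v (SF Zero).

Lemma has_zero_fill v x : ctx_L0 v = true -> has_zero x -> has_zero (fill v x).
Proof.
  intros Hv [w [Hw ->]]; exists (ctx_comp v w); split.
  - now rewrite ctx_L0_comp, Hv, Hw.
  - now rewrite fill_ctx_comp.
Qed.

Lemma has_zero_L0 x : has_zero x -> st_L0 x = true.
Proof. intros [v [Hv ->]]; now rewrite st_L0_fill, Hv. Qed.

Section Weakening.

Hypothesis w_in_R : r_w R = true.

Lemma zero_absorbs_fill u d :
  ctx_L0 u = true -> stoup_L0 d = true -> Dv (fill u (SF Zero), d).
Proof.
  induction u as [|u IH y|x u IH]; simpl; intros Hu Hd; split_andb.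
  - assert (Dv (SF Zero, None)) by infer (r_zero (free_sys cyc R)).
    destruct d as [a|]; [infer (r_wo (free_sys cyc R) (SF Zero) a w_in_R)|assumption].
  - assert (Dv (fill (CR (fill u (SF Zero)) Hole) SEmp, d)) by (simpl; rewrite comp_None_r; auto).
    infer (r_wi (free_sys cyc R) (CR (fill u (SF Zero)) Hole) y d w_in_R).
  - assert (Dv (fill (CL Hole (fill u (SF Zero))) SEmp, d)) by (simpl; auto).
    infer (r_wi (free_sys cyc R) (CL Hole (fill u (SF Zero))) x d w_in_R).
Qed.

Lemma zero_absorbs x u d :
  has_zero x -> ctx_L0 u = true -> stoup_L0 d = true -> Dv (fill u x, d).
Proof.
  intros [v [Hv ->]] Hu Hd; rewrite <- fill_ctx_comp.
  apply zero_absorbs_fill; auto; now rewrite ctx_L0_comp, Hu, Hv.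
Qed.

End Weakening.

Definition ext_le (x y : ext st) : Prop :=
  match x, y with
  | Bot, _ | Top, Top | Val _, Top => True
  | Top, _ | Val _, Bot => False
  | Val x, Val y => st_below x y
  end.

Lemma ext_le_trans x y z : ext_le x y -> ext_le y z -> ext_le x z.
Proof.
  destruct x, y, z; simpl; auto; try contradiction.
  intros H1 H2 u d H; auto.
Qed.

Lemma valid_fill_le k z z' d :
  ext_le z' z -> valid (eprod fill k z) d -> valid (eprod fill k z') d.
Proof. destruct k, z, z', d; simpl; auto; try contradiction; intros H; apply H. Qed.

Definition bang_image (x : st) : Prop := ones x \/ (r_w R = true /\ has_zero x).

Lemma bang_image_comp x y : bang_image x -> bang_image y -> bang_image (comp x y).
Proof.
  intros [Hx|[Hw Hx]] [Hy|[Hw' Hy]].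
  - left; now apply ones_comp.
  - right; split; auto; apply (has_zero_fill (CR x Hole)); simpl; auto.
    now rewrite ones_L0.
  - right; split; auto; apply (has_zero_fill (CL Hole y)); simpl; auto.
    now rewrite ones_L0.
  - right; split; auto; apply (has_zero_fill (CL Hole y)); simpl; auto.
    now rewrite has_zero_L0.
Qed.

Lemma tr_isK k : isK k -> tr k = Bot \/ exists k', tr k = Val k' /\ bang_image k'.
Proof.
  destruct k as [n|]; simpl; [|right; exists None; split; [|left]; simpl; auto].
  induction n as [a|n1 IH1 n2 IH2]; simpl; intros Hk.
  - destruct a; try contradiction; simpl.
    destruct (excluded_middle_informative _); [|destruct (r_w R) eqn:Hw]; simpl; auto.
    + right; eexists; split; [reflexivity|left; simpl; auto].
    + right; eexists; split; [reflexivity|right; split; auto; now exists Hole].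
  - destruct Hk as [Hk1 Hk2].
    destruct (IH1 Hk1) as [->|[y1 [-> H1]]]; simpl; auto.
    destruct (IH2 Hk2) as [->|[y2 [-> H2]]]; simpl; auto.
    right; exists (comp y1 y2); split; auto; now apply bang_image_comp.
Qed.

Lemma bang_image_below k w p :
  bang_image k -> ctx_L0 w = true -> (ones k -> st_below (fill w None) p) ->
  st_below (fill w k) p.
Proof.
  intros [Hk|[Hw Hz]] Hwl Hp u d H.
  - rewrite <- fill_ctx_comp, ones_erase, fill_ctx_comp by exact Hk; now apply Hp.
  - destruct (Dv_fill_L0 _ _ _ H); apply zero_absorbs; auto; now apply has_zero_fill.
Qed.

Lemma bang_image_move k v w :
  bang_image k -> ctx_L0 w = true -> fill w None = fill v None ->
  st_below (fill w k) (fill v k).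
Proof.
  intros Hk Hw E; apply bang_image_below; auto.
  intros Hones u d H; rewrite E, <- fill_ctx_comp.
  apply (ones_erase k); [exact Hones|]; now rewrite fill_ctx_comp.
Qed.

Definition valid_seq (s : seqnt) : Prop := valid (tr (fst s)) (tr_stoup (snd s)).

Lemma valid_left u z z' d :
  ext_le (tr z') (tr z) -> valid_seq (fill u z, d) -> valid_seq (fill u z', d).
Proof. unfold valid_seq; simpl; rewrite !tr_fill; apply valid_fill_le. Qed.

Lemma le_cut x a : valid_seq (x, Some a) -> ext_le (tr x) (tr (SF a)).
Proof.
  unfold valid_seq; simpl; destruct (tr x) as [| |x'], (val a) as [| |a']; simpl; auto.
  intros H u d H'; infer (r_cut (free_sys cyc R) x' a' u d).
Qed.

Lemma le_oneL : ext_le (tr (SF One)) (tr SEmp).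
Proof. intros u d H; infer (r_oneL (free_sys cyc R) u d). Qed.

Lemma le_prodL a b : ext_le (tr (SF (Prod a b))) (tr (comp (SF a) (SF b))).
Proof.
  simpl; destruct (val a) as [| |a'], (val b) as [| |b']; simpl; auto.
  intros u d H; infer (r_prodL (free_sys cyc R) u a' b' d).
Qed.

Lemma le_meetL1 a b : ext_le (tr (SF (Meet a b))) (tr (SF a)).
Proof.
  simpl; destruct (val a) as [| |a'], (val b) as [| |b'] eqn:Eb; simpl; auto.
  - apply st_below_refl.
  - intros u d H; infer (r_meetL1 (free_sys cyc R) u a' b' d).
Qed.

Lemma le_meetL2 a b : ext_le (tr (SF (Meet a b))) (tr (SF b)).
Proof.
  simpl; destruct (val a) as [| |a'] eqn:Ea, (val b) as [| |b']; simpl; auto.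
  - apply st_below_refl.
  - intros u d H; infer (r_meetL2 (free_sys cyc R) u a' b' d).
Qed.

Lemma le_ldivL x a b :
  valid_seq (x, Some a) -> ext_le (tr (comp x (SF (Ldiv a b)))) (tr (SF b)).
Proof.
  unfold valid_seq; cbn [fst snd]; rewrite tr_comp; simpl.
  destruct (tr x) as [| |x'], (val a) as [| |a'], (val b) as [| |b']; simpl; auto;
    try contradiction.
  intros Ha u d H; infer (r_ldivL (free_sys cyc R) x' a' b' u d).
Qed.

Lemma le_rdivL x a b :
  valid_seq (x, Some a) -> ext_le (tr (comp (SF (Rdiv b a)) x)) (tr (SF b)).
Proof.
  unfold valid_seq; cbn [fst snd]; rewrite tr_comp; simpl.
  destruct (tr x) as [| |x'], (val a) as [| |a'], (val b) as [| |b']; simpl; auto;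
    try contradiction.
  intros Ha u d H; infer (r_rdivL (free_sys cyc R) x' a' b' u d).
Qed.

Lemma le_bangL a : ext_le (tr (SF (Bang a))) (tr (SF a)).
Proof.
  simpl; destruct (excluded_middle_informative _) as [Hv|Hv].
  - exact (ext_le_trans _ _ _ le_oneL (le_cut None a Hv)).
  - destruct (r_w R) eqn:Hw; simpl; auto.
    destruct (val_weak a Hw) as [a' ->]; simpl; intros u d H.
    destruct (Dv_fill_L0 _ _ _ H); apply zero_absorbs; auto; now exists Hole.
Qed.

Lemma le_kw k : isK k -> ext_le (tr k) (tr SEmp).
Proof.
  intros Hk; destruct (tr_isK k Hk) as [->|[k' [-> Hk']]]; simpl; auto.
  apply (bang_image_below k' Hole None); auto; intros _; apply st_below_refl.
Qed.

Lemma le_kc k : isK k -> ext_le (tr k) (tr (comp k k)).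
Proof.
  intros Hk; rewrite tr_comp; destruct (tr_isK k Hk) as [->|[k' [-> Hk']]]; simpl; auto.
  apply (bang_image_below k' Hole (comp k' k')); auto.
  intros Hones u d H; now apply (ones_erase (comp k' k')) in H; [|apply ones_comp].
Qed.

Lemma le_ke k y :
  isK k ->
  ext_le (tr (comp y k)) (tr (comp k y)) /\ ext_le (tr (comp k y)) (tr (comp y k)).
Proof.
  intros Hk; rewrite !tr_comp; destruct (tr_isK k Hk) as [->|[k' [-> Hk']]];
    destruct (tr y) as [| |y'] eqn:Ey; simpl; auto.
  split; [apply (bang_image_move k' (CL Hole y') (CR y' Hole))
         |apply (bang_image_move k' (CR y' Hole) (CL Hole y'))];
    simpl; rewrite ?comp_None_r, ?(tr_L0 _ _ Ey); auto.
Qed.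

Lemma le_ka1 k y z :
  isK k ->
  ext_le (tr (comp k (comp y z))) (tr (comp (comp k y) z)) /\
  ext_le (tr (comp (comp k y) z)) (tr (comp k (comp y z))).
Proof.
  intros Hk; rewrite !tr_comp; destruct (tr_isK k Hk) as [->|[k' [-> Hk']]];
    destruct (tr y) as [| |y'] eqn:Ey, (tr z) as [| |z'] eqn:Ez; simpl; auto.
  split; [apply (bang_image_move k' (CL (CL Hole y') z') (CL Hole (comp y' z')))
         |apply (bang_image_move k' (CL Hole (comp y' z')) (CL (CL Hole y') z'))];
    simpl; rewrite ?st_L0_comp, ?(tr_L0 _ _ Ey), ?(tr_L0 _ _ Ez); auto.
Qed.

Lemma le_ka2 k x y :
  isK k ->
  ext_le (tr (comp x (comp y k))) (tr (comp (comp x y) k)) /\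
  ext_le (tr (comp (comp x y) k)) (tr (comp x (comp y k))).
Proof.
  intros Hk; rewrite !tr_comp; destruct (tr_isK k Hk) as [->|[k' [-> Hk']]];
    destruct (tr x) as [| |x'] eqn:Ex, (tr y) as [| |y'] eqn:Ey; simpl; auto.
  split; [apply (bang_image_move k' (CR (comp x' y') Hole) (CR x' (CR y' Hole)))
         |apply (bang_image_move k' (CR x' (CR y' Hole)) (CR (comp x' y') Hole))];
    simpl; rewrite ?st_L0_comp, ?comp_None_r, ?(tr_L0 _ _ Ex), ?(tr_L0 _ _ Ey); auto.
Qed.

Lemma le_ex x y : r_e R = true -> ext_le (tr (comp y x)) (tr (comp x y)).
Proof.
  intros He; rewrite !tr_comp; destruct (tr x) as [| |x'], (tr y) as [| |y']; simpl; auto.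
  intros u d H; infer (r_ex (free_sys cyc R) u x' y' d He).
Qed.

Lemma le_con x : r_c R = true -> ext_le (tr x) (tr (comp x x)).
Proof.
  intros Hc; rewrite tr_comp; destruct (tr x) as [| |x']; simpl; auto.
  intros u d H; infer (r_con (free_sys cyc R) u x' d Hc).
Qed.

Lemma le_wi x : r_w R = true -> ext_le (tr x) (tr SEmp).
Proof.
  intros Hw; destruct (tr_weak x Hw) as [x' Ex]; rewrite Ex; simpl.
  intros u d H; infer (r_wi (free_sys cyc R) u x' d Hw).
Qed.

Lemma valid_joinL u a b d :
  valid_seq (fill u (SF a), d) -> valid_seq (fill u (SF b), d) ->
  valid_seq (fill u (SF (Join a b)), d).
Proof.
  unfold valid_seq; cbn [fst snd]; rewrite !tr_fill; simpl.
  destruct (val a) as [| |a'], (val b) as [| |b']; simpl; auto.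
  destruct (tr_ctx u) as [| |u'], (tr_stoup d) as [| |d']; simpl; auto.
  intros Ha Hb; infer (r_joinL (free_sys cyc R) u' a' b' d').
Qed.

Lemma valid_zeroR x : valid_seq (x, None) -> valid_seq (x, Some Zero).
Proof.
  unfold valid_seq; simpl; destruct (tr x) as [| |x']; simpl; auto.
  intros H; infer (r_zeroR (free_sys cyc R) x').
Qed.

Lemma valid_ldivR x a b : valid_seq (comp (SF a) x, Some b) -> valid_seq (x, Some (Ldiv a b)).
Proof.
  unfold valid_seq; cbn [fst snd]; rewrite tr_comp; simpl.
  destruct (tr x) as [| |x'], (val a) as [| |a'], (val b) as [| |b']; simpl; auto.
  intros H; infer (r_ldivR (free_sys cyc R) x' a' b').
Qed.

Lemma valid_rdivR x a b : valid_seq (comp x (SF a), Some b) -> valid_seq (x, Some (Rdiv b a)).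
Proof.
  unfold valid_seq; cbn [fst snd]; rewrite tr_comp; simpl.
  destruct (tr x) as [| |x'], (val a) as [| |a'], (val b) as [| |b']; simpl; auto.
  intros H; infer (r_rdivR (free_sys cyc R) x' a' b').
Qed.

Lemma valid_prodR x y a b :
  valid_seq (x, Some a) -> valid_seq (y, Some b) -> valid_seq (comp x y, Some (Prod a b)).
Proof.
  unfold valid_seq; cbn [fst snd]; rewrite tr_comp; simpl.
  destruct (tr x) as [| |x'], (tr y) as [| |y'], (val a) as [| |a'], (val b) as [| |b'];
    simpl; auto; try contradiction.
  intros Ha Hb; infer (r_prodR (free_sys cyc R) x' y' a' b').
Qed.

Lemma valid_meetR x a b :
  valid_seq (x, Some a) -> valid_seq (x, Some b) -> valid_seq (x, Some (Meet a b)).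
Proof.
  unfold valid_seq; simpl.
  destruct (tr x) as [| |x'], (val a) as [| |a'], (val b) as [| |b']; simpl; auto.
  intros Ha Hb; infer (r_meetR (free_sys cyc R) x' a' b').
Qed.

Lemma valid_joinR1 x a b : valid_seq (x, Some a) -> valid_seq (x, Some (Join a b)).
Proof.
  unfold valid_seq; simpl.
  destruct (tr x) as [| |x'], (val a) as [| |a'], (val b) as [| |b'] eqn:Eb; simpl; auto;
    try contradiction.
  intros Ha; infer (r_joinR1 (free_sys cyc R) x' a' b').
Qed.

Lemma valid_joinR2 x a b : valid_seq (x, Some b) -> valid_seq (x, Some (Join a b)).
Proof.
  unfold valid_seq; simpl.
  destruct (tr x) as [| |x'], (val a) as [| |a'] eqn:Ea, (val b) as [| |b']; simpl; auto;
    try contradiction.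
  intros Hb; infer (r_joinR2 (free_sys cyc R) x' a' b').
Qed.

Lemma valid_bangR k a : isK k -> valid_seq (k, Some a) -> valid_seq (k, Some (Bang a)).
Proof.
  unfold valid_seq; cbn [fst snd]; intros Hk.
  destruct (tr_isK k Hk) as [->|[k' [-> [Hones|[Hw Hz]]]]]; simpl; auto.
  - destruct (excluded_middle_informative _) as [Hv|Hv]; simpl; intros H.
    + apply (ones_erase k' Hole); auto; infer (r_one (free_sys cyc R)).
    + exfalso; apply Hv; destruct (val a); simpl in *; auto.
      now apply (ones_erase k' Hole).
  - rewrite Hw; destruct (excluded_middle_informative _); simpl; intros _;
      apply (zero_absorbs Hw k' Hole); auto.
Qed.

Lemma valid_wo x a : r_w R = true -> valid_seq (x, None) -> valid_seq (x, Some a).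
Proof.
  intros Hw; destruct (val_weak a Hw) as [a' Ea].
  unfold valid_seq; simpl; rewrite Ea; destruct (tr x) as [| |x']; simpl; auto.
  intros H; infer (r_wo (free_sys cyc R) x' a' Hw).
Qed.

Lemma valid_axiom c : rule (exp_sys cyc R) [] c -> valid_seq c.
Proof.
  assert (Hax : forall c, rule (free_sys cyc R) [] c -> seq_L0 c = true -> Dv c)
    by (intros c' Hr Hc; apply (Dv_rule _ _ Hr Hc); intros ? []).
  intros Hr; inversion Hr; subst; unfold valid_seq, tilde, minus; simpl.
  all: repeat match goal with
         |- context [val ?a] => is_var a; destruct (val a) as [| |?] eqn:?
       end; simpl; auto.
  all: apply Hax; [econstructor; eauto|];
       repeat match goal with E : val _ = Val _ |- _ => apply val_L0 in E end; solve_L0.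
Qed.

Lemma rule_sound prems c :
  rule (exp_sys cyc R) prems c -> (forall p, In p prems -> valid_seq p) -> valid_seq c.
Proof.
  intros Hr IH.
  destruct Hr; try (apply valid_axiom; constructor; assumption);
    cbn [exp_sys s_bang s_R] in *.
  - eapply valid_left; [apply le_cut|]; apply IH; simpl; auto.
  - eapply valid_left; [apply le_oneL|]; apply IH; simpl; auto.
  - apply valid_zeroR; apply IH; simpl; auto.
  - eapply valid_left; [apply le_ldivL|]; apply IH; simpl; auto.
  - apply valid_ldivR; apply IH; simpl; auto.
  - eapply valid_left; [apply le_rdivL|]; apply IH; simpl; auto.
  - apply valid_rdivR; apply IH; simpl; auto.
  - eapply valid_left; [apply le_prodL|]; apply IH; simpl; auto.
  - apply valid_prodR; apply IH; simpl; auto.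
  - eapply valid_left; [apply le_meetL1|]; apply IH; simpl; auto.
  - eapply valid_left; [apply le_meetL2|]; apply IH; simpl; auto.
  - apply valid_meetR; apply IH; simpl; auto.
  - apply valid_joinL; apply IH; simpl; auto.
  - apply valid_joinR1; apply IH; simpl; auto.
  - apply valid_joinR2; apply IH; simpl; auto.
  - eapply valid_left; [apply le_bangL|]; apply IH; simpl; auto.
  - apply valid_bangR; [assumption|]; apply IH; simpl; auto.
  - eapply valid_left; [apply le_kw; assumption|]; apply IH; simpl; auto.
  - eapply valid_left; [apply le_kc; assumption|]; apply IH; simpl; auto.
  - eapply valid_left; [eapply proj1, le_ke; assumption|]; apply IH; simpl; auto.
  - eapply valid_left; [eapply proj2, le_ke; assumption|]; apply IH; simpl; auto.
  - eapply valid_left; [eapply proj1, le_ka1; assumption|]; apply IH; simpl; auto.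
  - eapply valid_left; [eapply proj2, le_ka1; assumption|]; apply IH; simpl; auto.
  - eapply valid_left; [eapply proj1, le_ka2; assumption|]; apply IH; simpl; auto.
  - eapply valid_left; [eapply proj2, le_ka2; assumption|]; apply IH; simpl; auto.
  - eapply valid_left; [apply le_ex; assumption|]; apply IH; simpl; auto.
  - eapply valid_left; [apply le_con; assumption|]; apply IH; simpl; auto.
  - eapply valid_left; [apply le_wi; assumption|]; apply IH; simpl; auto.
  - apply valid_wo; [assumption|]; apply IH; simpl; auto.
Qed.

Lemma valid_exp_derivable s : derivable (exp_sys cyc R) S s -> valid_seq s.
Proof.
  induction 1 as [[x d] Hs|prems c Hr _ _ IH].
  - pose proof (S_L0 _ Hs) as HL0; unfold valid_seq; cbn [fst snd].
    rewrite tr_id, tr_stoup_id by solve_L0; now apply d_hyp.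
  - exact (rule_sound _ _ Hr IH).
Qed.

Lemma exp_derivable_free s :
  seq_L0 s = true -> derivable (exp_sys cyc R) S s -> Dv s.
Proof.
  destruct s as [x d]; intros Hs H; apply valid_exp_derivable in H.
  unfold valid_seq in H; cbn [fst snd] in H.
  rewrite tr_id, tr_stoup_id in H by solve_L0; exact H.
Qed.

End Interpretation.

Lemma rule_free_exp cyc R prems c : rule (free_sys cyc R) prems c -> rule (exp_sys cyc R) prems c.
Proof.
  (* [econstructor] alone may commit to a k-rule for an instance of (e), (c) or (w). *)
  destruct 1; cbn [free_sys exp_sys s_cyc s_bang s_R] in *; try discriminate;
    first [ solve [econstructor; eauto]
          | now apply r_ex | now apply r_con | now apply r_wi | now apply r_wo ].
Qed.

Lemma free_derivable_exp cyc R S s :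
  derivable (free_sys cyc R) S s -> derivable (exp_sys cyc R) S s.
Proof.
  induction 1 as [t Ht|prems c Hr _ _ IH]; [now apply d_hyp|].
  apply (d_rule _ _ prems c (rule_free_exp _ _ _ _ Hr)); auto.
Qed.

Lemma exp_conservative cyc R S s :
  (forall t, S t -> seq_L0 t = true) -> seq_L0 s = true ->
  derivable (exp_sys cyc R) S s <-> derivable (free_sys cyc R) S s.
Proof.
  intros HS Hs; split; [now apply exp_derivable_free|apply free_derivable_exp].
Qed.

Theorem mainTheorem17 (R : rset) (S : seqnt -> Prop) (s : seqnt) :
  (forall t, S t -> seq_L0 t = true) -> seq_L0 s = true ->
  (derivable (NACCLLm R) S s <-> derivable (InFNL R) S s) /\
  (derivable (NACCLL R) S s <-> derivable (CyInFNL R) S s).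
Proof.
  intros HS Hs; split; [exact (exp_conservative false R S s HS Hs)
                       |exact (exp_conservative true R S s HS Hs)].
Qed.
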